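(* Let $\mathcal{M}=(K,G,A,(\gamma')_{\gamma\in\Gamma},(\delta')_{\delta\in\Delta})$ be a model of $T$ and $\kappa>|\Gamma\Delta|$ an infinite cardinal. Let $K'$ be a real closed subfield of $K$ with $|K'|<\kappa$, $G'$ a pure subgroup of $G$ containing $\Gamma'$ with $G'\subseteq K'(i)$, and $A'$ a pure subgroup of $A$ containing $\Delta'$ with $A'\subseteq K'$, such that $K'(i)$ and $\mathbb{Q}(GA)$ are free over $\mathbb{Q}(G'A')$. Then $G\cap K'(i)=G'$ and $A\cap K'=A'$. Moreover, under these hypotheses, the following are equivalent: (a) for every $k\in(K')^{>0}$ there is $a\in A'$ with $a\le k<a\varepsilon'$; (b) $K'$ is closed under $\lambda$, i.e. $\lambda((K')^{>0})\subseteq K'$.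
   Context: $T$ is the theory of structures $(K,G,A,(\gamma')_{\gamma\in\Gamma},(\delta')_{\delta\in\Delta})$ (for a fixed finite rank $\Gamma\le\mathbb{S}^1$ and $\Delta=\varepsilon^{\mathbb{Z}}$, real $\varepsilon>1$) with $K$ real closed, $A\le K^{>0}$ having $\varepsilon'$ as least element $>1$, $G$ a dense subgroup of $\mathbb{S}^1(K)$, for all $k\in K^{>0}$ some $a\in A$ with $a\le k<a\varepsilon'$, $\gamma\mapsto\gamma'$ and $\delta\mapsto\delta'$ homomorphisms into $G$ and $A$, the orientation axioms, the Mann axioms (every nondegenerate solution in $GA\subseteq K(i)$ of $\sum a_ix_i=1$, $a_i\in\mathbb{Q}^\times$, is the image $(\gamma_1'\delta_1',\dots)$ of a nondegenerate solution in $\Gamma\Delta$), and torsion of $G$ equal to the image of torsion of $\Gamma$. $\Gamma'$, $\Delta'$ denote the images of $\Gamma,\Delta$. $K(i)$ is identified with $K^2$; $A$ is viewed inside $K(i)$. A subgroup $B$ of $A$ is pure if $B\cap A^{[m]}=B^{[m]}$ for all $m\ge1$. For subfields $k\subseteq E,F$ of a common field, $E$ and $F$ are free over $k$ if every subset of $E$ algebraically independent over $k$ is algebraically independent over $F$. $\lambda:K^{>0}\to A$ sends $k$ to the unique $a\in A$ with $a\le k<a\varepsilon'$. *)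

(* for the model M (K : rcfType, K(i) = K*K with explicit
   operations); Stdlib reals for the fixed parameters Gamma <= S^1 in C = R*R
   and Delta = eps^Z. *)
From Stdlib Require Import Reals List.
From HB Require Import structures.
From mathcomp Require Import all_boot all_order all_algebra.
Set Implicit Arguments. Unset Strict Implicit. Unset Printing Implicit Defensive.
Import Order.TTheory GRing.Theory Num.Theory.
Local Open Scope ring_scope.

Definition Cone : R * R := (R1, R0).
Definition Czero : R * R := (R0, R0).
Definition Cadd (x y : R * R) : R * R := (Rplus x.1 y.1, Rplus x.2 y.2).
Definition Cmul (x y : R * R) : R * R :=
  (Rminus (Rmult x.1 y.1) (Rmult x.2 y.2), Rplus (Rmult x.1 y.2) (Rmult x.2 y.1)).
Definition Cinv (x : R * R) : R * R :=
  let n := Rplus (Rmult x.1 x.1) (Rmult x.2 x.2) in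
  (Rdiv x.1 n, Ropp (Rdiv x.2 n)).
Definition Cexp (x : R * R) (n : nat) : R * R := iter n (Cmul x) Cone.
Definition Cexpz (x : R * R) (z : int) : R * R :=
  match z with Posz n => Cexp x n | Negz n => Cinv (Cexp x n.+1) end.
Definition Con_circle (x : R * R) : Prop :=
  Rplus (Rmult x.1 x.1) (Rmult x.2 x.2) = R1.
Definition Rpowz (e : R) (z : int) : R :=
  match z with Posz n => pow e n | Negz n => Rinv (pow e n.+1) end.
Definition Rint (z : int) : R :=
  match z with Posz n => INR n | Negz n => Ropp (INR n.+1) end.

(* rationals: (num, den) represents num / (den+1) *)
Definition ratq := (int * nat)%type.
Definition ratq_R (q : ratq) : R := Rdiv (Rint q.1) (INR q.2.+1).

Section KI.
Variable K : rcfType.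

Definition cone : K * K := (1, 0).
Definition czero : K * K := (0, 0).
Definition cadd (x y : K * K) : K * K := (x.1 + y.1, x.2 + y.2).
Definition copp (x : K * K) : K * K := (- x.1, - x.2).
Definition cmul (x y : K * K) : K * K :=
  (x.1 * y.1 - x.2 * y.2, x.1 * y.2 + x.2 * y.1).
Definition cinv (x : K * K) : K * K :=
  let n := x.1 ^+ 2 + x.2 ^+ 2 in (x.1 / n, - (x.2 / n)).
Definition cexp (x : K * K) (n : nat) : K * K := iter n (cmul x) cone.
Definition cofK (a : K) : K * K := (a, 0).
Definition on_circle (x : K * K) : Prop := x.1 ^+ 2 + x.2 ^+ 2 = 1.
Definition ratq_K (q : ratq) : K := q.1%:~R / (q.2.+1)%:R.

Definition is_subfieldC (P : K * K -> Prop) : Prop :=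
  [/\ P czero /\ P cone,
      (forall x y, P x -> P y -> P (cadd x y)),
      (forall x, P x -> P (copp x)),
      (forall x y, P x -> P y -> P (cmul x y)) &
      (forall x, P x -> x <> czero -> P (cinv x))].
Definition gen_field (S : K * K -> Prop) (x : K * K) : Prop :=
  forall P, is_subfieldC P -> (forall s, S s -> P s) -> P x.

Definition Ci (K' : K -> Prop) (x : K * K) : Prop := K' x.1 /\ K' x.2.
Definition GAset (G : K * K -> Prop) (A : K -> Prop) (x : K * K) : Prop :=
  exists g a, G g /\ A a /\ x = cmul g (cofK a).

(* A multivariate
   polynomial in n variables over k is encoded as a finite list of
   (coefficient, exponent vector) with pairwise distinct exponent vectors. *)
Definition monom (xs : seq (K * K)) (e : seq nat) : K * K :=
  foldr cmul cone [seq cexp p.1 p.2 | p <- zip xs e].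
Definition alg_dep (k : K * K -> Prop) (xs : seq (K * K)) : Prop :=
  exists p : seq ((K * K) * seq nat),
    [/\ uniq (map snd p),
        (forall c, c \in p -> k c.1 /\ size c.2 = size xs),
        (exists c, c \in p /\ c.1 <> czero) &
        foldr cadd czero [seq cmul c.1 (monom xs c.2) | c <- p] = czero].
Definition set_alg_indep (k S : K * K -> Prop) : Prop :=
  forall xs, uniq xs -> (forall x, x \in xs -> S x) -> ~ alg_dep k xs.
Definition free_over (k E F : K * K -> Prop) : Prop :=
  forall S, (forall x, S x -> E x) -> set_alg_indep k S -> set_alg_indep F S.

Definition real_closed_subfield (K' : K -> Prop) : Prop :=
  [/\ K' 0 /\ K' 1,
      (forall x y, K' x -> K' y -> K' (x + y)) /\ (forall x, K' x -> K' (- x)),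
      (forall x y, K' x -> K' y -> K' (x * y)) /\ (forall x, K' x -> x != 0 -> K' x^-1),
      (forall x, K' x -> 0 <= x -> exists y, K' y /\ y * y = x) &
      (forall p : {poly K}, (forall i, K' p`_i) -> odd (size p).-1 ->
         exists x, K' x /\ root p x)].

Definition subgroupC (G G' : K * K -> Prop) : Prop :=
  [/\ (forall g, G' g -> G g), G' cone,
      (forall x y, G' x -> G' y -> G' (cmul x y)) &
      (forall x, G' x -> G' (cinv x))].
Definition pure_subgroupC (G G' : K * K -> Prop) : Prop :=
  subgroupC G G' /\
  forall (m : nat) g, (0 < m)%N -> G' g ->
    (exists h, G h /\ cexp h m = g) -> exists h, G' h /\ cexp h m = g.
Definition subgroupK (A A' : K -> Prop) : Prop :=
  [/\ (forall a, A' a -> A a), A' 1,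
      (forall x y, A' x -> A' y -> A' (x * y)) &
      (forall x, A' x -> A' x^-1)].
Definition pure_subgroupK (A A' : K -> Prop) : Prop :=
  subgroupK A A' /\
  forall (m : nat) a, (0 < m)%N -> A' a ->
    (exists h, A h /\ h ^+ m = a) -> exists h, A' h /\ h ^+ m = a.

(* lambda(k) = a  :<->  a is the unique element of A with a <= k < a eps' *)
Definition is_lambda (A : K -> Prop) (eps' k a : K) : Prop :=
  A a /\ a <= k < a * eps'.

End KI.

Definition Delta_eps (eps : R) (d : R) : Prop := exists z : int, d = Rpowz eps z.
Definition GamDelta (Gam : R * R -> Prop) (eps : R) (y : R * R) : Prop :=
  exists g d, Gam g /\ Delta_eps eps d /\ y = Cmul g (d, R0).

Definition params_ok (Gam : R * R -> Prop) (eps : R) : Prop :=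
  [/\ Rlt R1 eps,
      (forall g, Gam g -> Con_circle g) /\ Gam Cone,
      (forall x y, Gam x -> Gam y -> Gam (Cmul x y)),
      (forall x, Gam x -> Gam (Cinv x)) &
      (* of finite rank *)
      exists gens : seq (R * R), (forall g, List.In g gens -> Gam g) /\
        forall g, Gam g -> exists (m : nat) (ks : seq int),
          (0 < m)%N /\ size ks = size gens /\
          Cexp g m = foldr Cmul Cone [seq Cexpz p.1 p.2 | p <- zip gens ks]].

Definition Cnondeg_sol (a : seq ratq) (ys : seq (R * R)) : Prop :=
  let w := [seq Cmul (ratq_R p.1, R0) p.2 | p <- zip a ys] in
  [/\ size a = size ys, foldr Cadd Czero w = Cone &
      forall m : seq bool, size m = size ys -> has id m ->
        foldr Cadd Czero (mask m w) <> Czero].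
Definition nondeg_sol (K : rcfType) (a : seq ratq) (xs : seq (K * K)) : Prop :=
  let w := [seq cmul (cofK (ratq_K K p.1)) p.2 | p <- zip a xs] in
  [/\ size a = size xs, foldr (@cadd K) (czero K) w = cone K &
      forall m : seq bool, size m = size xs -> has id m ->
        foldr (@cadd K) (czero K) (mask m w) <> czero K].

Definition orientR (p q r : R * R) : R :=
  Rminus (Rmult (Rminus q.1 p.1) (Rminus r.2 p.2))
         (Rmult (Rminus q.2 p.2) (Rminus r.1 p.1)).
Definition orientK (K : rcfType) (p q r : K * K) : K :=
  (q.1 - p.1) * (r.2 - p.2) - (q.2 - p.2) * (r.1 - p.1).

Definition modelT (Gam : R * R -> Prop) (eps : R) (K : rcfType)
    (G : K * K -> Prop) (A : K -> Prop) (gp : R * R -> K * K) (dp : R -> K) : Prop :=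
  [/\
      (subgroupK (fun x => 0 < x) A /\
       [/\ A (dp eps), 1 < dp eps & forall a, A a -> 1 < a -> dp eps <= a] /\
      (forall k : K, 0 < k -> exists a, A a /\ a <= k < a * dp eps)),
      (subgroupC (@on_circle K) G /\
       forall z e, on_circle z -> 0 < e ->
         exists g, G g /\ (g.1 - z.1) ^+ 2 + (g.2 - z.2) ^+ 2 < e),
      ((forall g, Gam g -> G (gp g)) /\
       (forall x y, Gam x -> Gam y -> gp (Cmul x y) = cmul (gp x) (gp y)) /\
       (forall d, Delta_eps eps d -> A (dp d)) /\
       (forall x y, Delta_eps eps x -> Delta_eps eps y -> dp (Rmult x y) = dp x * dp y)),
      (
      (forall g1 g2 g3, Gam g1 -> Gam g2 -> Gam g3 ->
         (Rlt R0 (orientR g1 g2 g3) <-> 0 < orientK (gp g1) (gp g2) (gp g3))) /\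
      (forall (a : seq ratq) (xs : seq (K * K)),
         (forall q, q \in a -> q.1 != 0) ->
         (forall x, x \in xs -> GAset G A x) ->
         nondeg_sol a xs ->
         exists gd : seq ((R * R) * R),
           [/\ (forall p, List.In p gd -> Gam p.1 /\ Delta_eps eps p.2),
               Cnondeg_sol a [seq Cmul p.1 (p.2, R0) | p <- gd] &
               xs = [seq cmul (gp p.1) (cofK (dp p.2)) | p <- gd]])) &
      (forall g, (G g /\ exists n, (0 < n)%N /\ cexp g n = cone K) <->
         exists c, [/\ Gam c, (exists n, (0 < n)%N /\ Cexp c n = Cone) & g = gp c])].

Definition card_lt (X Y : Type) : Prop :=
  (exists f : X -> Y, injective f) /\ ~ (exists f : Y -> X, injective f).

(* Let x be an element of GA lying in K'(i).  It is algebraic over Q(GA), hence,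
   by freeness, over Q(G'A').  Clearing denominators in a polynomial relation
   over Q(G'A') gives a vanishing sum of terms r h x^n with r a nonzero integer
   and h in G'A'.  A minimal vanishing subsum containing terms of two different
   exponents, divided by one of its terms, is a nondegenerate solution in GA of
   a linear equation with rational coefficients; by the Mann axioms its entries
   lie in Gamma'Delta', so the ratio of two terms shows x^m in G'A' for some
   m > 0.  For x = a in A the G'-part of a^m has modulus 1 and is real and
   positive, so a^m is in A' and purity gives a in A'.  For x = g in G the
   A'-part is 1, purity gives h in G' with h^m = g^m, and g/h is torsion, hence
   in Gamma'.  Since lambda(k) is the unique a in A with a <= k < a eps', both
   (a) and (b) say that lambda(k) lies in A' = A cap K'. *)

From Stdlib Require Import Reals List Classical.
From HB Require Import structures.
From mathcomp Require Import all_boot all_order all_algebra.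
From mathcomp Require Import complex ring zify.
Set Implicit Arguments. Unset Strict Implicit. Unset Printing Implicit Defensive.
Import Order.TTheory GRing.Theory Num.Theory.
Local Open Scope ring_scope.

Section ComplexOfPair.
Variable K : rcfType.
Local Notation C := (complex K).

Definition complex_of (x : K * K) : C := Complex x.1 x.2.
Definition pair_of (z : C) : K * K := (complex.Re z, complex.Im z).

Lemma complex_ofK : cancel complex_of pair_of. Proof. by case. Qed.
Lemma pair_ofK : cancel pair_of complex_of. Proof. by case. Qed.
Lemma complex_of_inj : injective complex_of. Proof. exact: can_inj complex_ofK. Qed.

Lemma complex_of0 : complex_of (czero K) = 0. Proof. by []. Qed.
Lemma complex_of1 : complex_of (cone K) = 1. Proof. by []. Qed.
Lemma complex_ofD x y : complex_of (cadd x y) = complex_of x + complex_of y.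
Proof. by case: x; case: y. Qed.
Lemma complex_ofN x : complex_of (copp x) = - complex_of x. Proof. by case: x. Qed.
Lemma complex_ofM x y : complex_of (cmul x y) = complex_of x * complex_of y.
Proof. by case: x; case: y. Qed.
Lemma complex_ofV x : complex_of (cinv x) = (complex_of x)^-1. Proof. by case: x. Qed.
Lemma complex_of_cofK a : complex_of (cofK a) = (a%:C)%C. Proof. by []. Qed.

Lemma complex_ofX x n : complex_of (cexp x n) = complex_of x ^+ n.
Proof. by elim: n => //= n IH; rewrite complex_ofM IH exprS. Qed.

Lemma complex_of_foldr_cadd (l : seq (K * K)) :
  complex_of (foldr (@cadd K) (czero K) l) = \sum_(y <- l) complex_of y.
Proof. by elim: l => [|y l IH]; rewrite ?big_nil ?big_cons //= complex_ofD IH. Qed.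

Lemma complex_of_circle_neq0 g : on_circle g -> complex_of g != 0.
Proof.
rewrite /on_circle => Hg; apply/eqP => /(congr1 pair_of); rewrite complex_ofK => g0.
by move: Hg; rewrite g0 /= expr0n addr0 => /eqP; rewrite eq_sym oner_eq0.
Qed.

End ComplexOfPair.

Section VanishingSums.
Variables (V : zmodType) (X : eqType) (f : X -> V).

Definition nonvanishing_subsums (S : seq X) : Prop :=
  forall m, size m = size S -> has id m -> \sum_(t <- mask m S) f t != 0.

Lemma big_mask_negb (Q : pred X) (s : seq X) (m : bitseq) : size m = size s ->
  \sum_(x <- s | Q x) f x =
  \sum_(x <- mask m s | Q x) f x + \sum_(x <- mask (map negb m) s | Q x) f x.
Proof.
elim: s m => [|x s IH] [|b m] //=; first by rewrite !big_nil addr0.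
move=> [Hs]; case: b; rewrite /= !big_cons (IH m Hs); case: (Q x) => //.
  by rewrite addrA.
by rewrite addrCA.
Qed.

Lemma minimal_vanishing_subsum (P : pred X) (T : seq X) :
  \sum_(t <- T) f t = 0 -> \sum_(t <- T | P t) f t != 0 ->
  exists2 S, {subset S <= T} &
    [/\ \sum_(t <- S) f t = 0, \sum_(t <- S | P t) f t != 0 &
        forall m, size m = size S -> has id m -> has negb m ->
          \sum_(t <- mask m S) f t != 0].
Proof.
have [N] := ubnP (size T); elim: N T => // N IH T HsT T0 TP.
have [[m [Hsm Hid Hneg Hz]] | Tmin] := classic (exists m, [/\ size m = size T,
    has id m, has negb m & \sum_(t <- mask m T) f t = 0]); last first.
  exists T => //; split => // m Hsm Hid Hneg; apply/eqP => Hz.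
  by apply: Tmin; exists m.
have shorter m' : size m' = size T -> has negb m' -> (size (mask m' T) < N)%N.
  move=> Hsm' /[!has_count] Hn; rewrite size_mask //.
  have := count_predC id m'; have : count negb m' = count (predC id) m' by [].
  by rewrite Hsm'; lia.
have Hsmn : size (map negb m) = size T by rewrite size_map.
have Hnegn : has negb (map negb m) by rewrite has_map; apply: sub_has Hid; case.
have Hzn : \sum_(t <- mask (map negb m) T) f t = 0.
  by move: T0; rewrite (big_mask_negb predT Hsm) Hz add0r.
have lift m' S : {subset S <= mask m' T} -> {subset S <= T}.
  by move=> SS x /SS /mem_mask.
have [HP | HP] := eqVneq (\sum_(t <- mask m T | P t) f t) 0.
- have HPn : \sum_(t <- mask (map negb m) T | P t) f t != 0.
    by move: TP; rewrite (big_mask_negb P Hsm) HP add0r.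
  have [S SS HS] := IH _ (shorter _ Hsmn Hnegn) Hzn HPn.
  by exists S => //; apply: lift SS.
- have [S SS HS] := IH _ (shorter _ Hsm Hneg) Hz HP.
  by exists S => //; apply: lift SS.
Qed.

Lemma vanishing_sum_split (P : pred X) (T : seq X) :
  \sum_(t <- T) f t = 0 -> \sum_(t <- T | P t) f t != 0 ->
  exists t0 R, [/\ t0 \in T, {subset R <= T}, P t0, has (predC P) R &
    f t0 + \sum_(t <- R) f t = 0 /\ nonvanishing_subsums R].
Proof.
move=> T0 TP; have [S ST [S0 SP Smin]] := minimal_vanishing_subsum T0 TP.
have /hasP [t0 St0 Pt0] : has P S.
  by apply/negPn/negP => nP; move: SP; rewrite big_hasC ?eqxx.
move: ST S0 SP Smin; case/splitPr: St0 => S1 S2 ST S0 SP Smin.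
exists t0, (S1 ++ S2); split => //.
- by apply: ST; rewrite mem_cat mem_head orbT.
- by move=> x; rewrite mem_cat => Hx; apply: ST; rewrite mem_cat in_cons;
    case/orP: Hx => ->; rewrite ?orbT.
- apply/negPn/negP => /hasPn nP.
  have allS : all P (S1 ++ t0 :: S2).
    rewrite all_cat /= Pt0 -all_cat; apply/allP => x /nP; exact: negbNE.
  by move: SP; rewrite -big_filter (all_filterP allS) S0 eqxx.
split; first by move: S0; rewrite !big_cat big_cons addrCA.
move=> m Hsm Hid; apply/eqP => Hz.
have Hk : (size S1 <= size m)%N by rewrite Hsm size_cat leq_addr.
have Htk : size (take (size S1) m) = size S1 := size_takel Hk.
pose m' := take (size S1) m ++ false :: drop (size S1) m.
have : \sum_(t <- mask m' (S1 ++ t0 :: S2)) f t != 0.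
  apply: Smin.
  - by rewrite !size_cat /= size_drop Htk Hsm size_cat; lia.
  - by rewrite has_cat /= -has_cat cat_take_drop.
  - by rewrite has_cat /= orbT.
by rewrite mask_cat //= -mask_cat // cat_take_drop Hz eqxx.
Qed.

End VanishingSums.

Definition unit_subgroup (C : fieldType) (P : C -> Prop) : Prop :=
  [/\ P 1, (forall x y, P x -> P y -> P (x * y)),
      (forall x, P x -> P x^-1) & (forall x, P x -> x != 0)].

Section IntegralSpan.
Variables (C : fieldType) (H : C -> Prop).
Hypothesis unitH : unit_subgroup H.

Definition zspan (z : C) : Prop :=
  exists l : seq (int * C),
    (forall p, p \in l -> H p.2) /\ z = \sum_(p <- l) p.1%:~R * p.2.

(* The field of fractions of the ring [zspan], i.e. the subfield generated by [H]. *)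
Definition zfrac (z : C) : Prop :=
  exists u v, [/\ zspan u, zspan v, v != 0 & z = u / v].

Lemma zspan0 : zspan 0.
Proof. by exists [::]; rewrite big_nil. Qed.

Lemma zspan_mem h : H h -> zspan h.
Proof.
move=> Hh; exists [:: (1%Z, h)]; split; first by move=> p; rewrite inE => /eqP ->.
by rewrite big_seq1 mul1r.
Qed.

Lemma zspan1 : zspan 1.
Proof. by apply: zspan_mem; case: unitH. Qed.

Lemma zspanD x y : zspan x -> zspan y -> zspan (x + y).
Proof.
move=> [l1 [H1 ->]] [l2 [H2 ->]]; exists (l1 ++ l2); split; last by rewrite big_cat.
by move=> p; rewrite mem_cat => /orP [/H1|/H2].
Qed.

Lemma zspanZ (r : int) x : zspan x -> zspan (r%:~R * x).
Proof.
move=> [l [Hl ->]]; exists [seq (r * p.1, p.2)%R | p <- l]; split.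
  by move=> p /mapP [q /Hl Hq ->].
by rewrite big_map mulr_sumr; apply: eq_bigr => p _ /=; rewrite intrM mulrA.
Qed.

Lemma zspanN x : zspan x -> zspan (- x).
Proof. by move=> /(zspanZ (-1)); rewrite mulN1r. Qed.

Lemma zspanMr x h : zspan x -> H h -> zspan (x * h).
Proof.
case: unitH => _ HM _ _ [l [Hl ->]] Hh; exists [seq (p.1, p.2 * h) | p <- l].
split; first by move=> p /mapP [q Hq ->]; exact: HM (Hl _ Hq) Hh.
by rewrite big_map mulr_suml; apply: eq_bigr => p _; rewrite mulrA.
Qed.

Lemma zspanM x y : zspan x -> zspan y -> zspan (x * y).
Proof.
move=> Hx [l [Hl ->]]; elim: l Hl => [|p l IH] Hl.
  by rewrite big_nil mulr0; exact: zspan0.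
rewrite big_cons mulrDr mulrCA; apply: zspanD.
  by apply/zspanZ/zspanMr/Hl/mem_head.
by apply: IH => q Hq; apply/Hl/mem_behead.
Qed.

Lemma zfrac_zspan u : zspan u -> zfrac u.
Proof. by exists u, 1; rewrite divr1 oner_neq0; split => //; exact: zspan1. Qed.

Lemma zfracD x y : zfrac x -> zfrac y -> zfrac (x + y).
Proof.
move=> [u1 [v1 [Hu1 Hv1 Hn1 ->]]] [u2 [v2 [Hu2 Hv2 Hn2 ->]]].
exists (u1 * v2 + u2 * v1), (v1 * v2); split; rewrite ?mulf_neq0 //.
- by apply: zspanD; apply: zspanM.
- exact: zspanM.
- by field; rewrite Hn1 Hn2.
Qed.

Lemma zfracN x : zfrac x -> zfrac (- x).
Proof.
move=> [u [v [Hu Hv Hn ->]]]; exists (- u), v; split => //; last by rewrite mulNr.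
exact: zspanN.
Qed.

Lemma zfracM x y : zfrac x -> zfrac y -> zfrac (x * y).
Proof.
move=> [u1 [v1 [Hu1 Hv1 Hn1 ->]]] [u2 [v2 [Hu2 Hv2 Hn2 ->]]].
exists (u1 * u2), (v1 * v2); split; rewrite ?mulf_neq0 //; try exact: zspanM.
by field; rewrite Hn1 Hn2.
Qed.

Lemma zfracV x : zfrac x -> zfrac x^-1.
Proof.
move=> [u [v [Hu Hv Hn ->]]]; have [-> | u0] := eqVneq u 0.
  by rewrite mul0r invr0; apply: zfrac_zspan; exact: zspan0.
by exists v, u; rewrite invf_div.
Qed.

Lemma zfrac_common_denominator (p : seq (C * nat)) :
  (forall c, c \in p -> zfrac c.1) ->
  exists D, [/\ D != 0, zspan D & forall c, c \in p -> zspan (D * c.1)].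
Proof.
elim: p => [|c p IH] Hp; first by exists 1; rewrite oner_neq0; split => //; exact: zspan1.
have [D [D0 HD HDp]] := IH (fun c' Hc' => Hp c' (mem_behead (s := c :: p) Hc')).
have [u [v [Hu Hv v0 Hc]]] := Hp c (mem_head _ _).
exists (D * v); split; rewrite ?mulf_neq0 //; first exact: zspanM.
move=> c'; rewrite in_cons => /orP [/eqP -> | Hc'].
  by rewrite Hc -mulrA (mulrC v) divfK //; exact: zspanM.
by rewrite mulrAC; apply: zspanM => //; exact: HDp.
Qed.

Lemma zspan_poly_expand (D xi : C) (p : seq (C * nat)) :
  (forall c, c \in p -> zspan (D * c.1)) ->
  exists T : seq ((int * C) * nat),
    (forall t, t \in T -> H t.1.2 /\ t.1.1 != 0) /\
    forall P : pred nat,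
      \sum_(t <- T | P t.2) t.1.1%:~R * (t.1.2 * xi ^+ t.2) =
      \sum_(c <- p | P c.2) D * c.1 * xi ^+ c.2.
Proof.
elim: p => [|c p IH] Hp; first by exists [::]; split => // P; rewrite !big_nil.
have [T [HT HTs]] := IH (fun c' Hc' => Hp c' (mem_behead (s := c :: p) Hc')).
have [l [Hl Hle]] := Hp c (mem_head _ _).
exists ([seq (q, c.2) | q <- l & q.1 != 0] ++ T); split.
  move=> t; rewrite mem_cat => /orP [/mapP [q] | /HT //].
  by rewrite mem_filter => /andP [q0 /Hl Hq] ->.
move=> P; rewrite big_cat HTs big_map big_cons /=.
case: (P c.2); last by rewrite big_pred0 ?add0r.
rewrite big_filter Hle mulr_suml big_mkcond /=; congr (_ + _); apply: eq_bigr => q _.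
by case: eqP => [->|]; rewrite ?mul0r // mulrA.
Qed.

End IntegralSpan.

Lemma unit_subgroupX (C : fieldType) (P : C -> Prop) x n :
  unit_subgroup P -> P x -> P (x ^+ n).
Proof. by case=> P1 PM _ _ Px; elim: n => [|n IH]; rewrite ?expr0 ?exprS //; apply: PM. Qed.

Definition ratq_val (C : fieldType) (q : ratq) : C := q.1%:~R / (q.2.+1)%:R.

Lemma ratq_val_div_int (C : fieldType) (r0 : int) : r0 != 0 ->
  exists (g : int -> int) (d : nat), (forall r, r != 0 -> g r != 0) /\
    forall r, ratq_val C (g r, d) = - r%:~R / r0%:~R.
Proof.
case: r0 => [[|n]|n] // _.
- exists (fun r => - r), n; split => r; first by rewrite oppr_eq0.
  by rewrite /ratq_val /= intrN -pmulrn.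
- exists id, n; split => // r.
  by rewrite /ratq_val /= NegzE intrN -pmulrn invrN mulrN mulNr opprK.
Qed.

Lemma exists_pos_power_mem (C : fieldType) (P : C -> Prop) (xi : C) (a b : nat) :
  unit_subgroup P -> a != b -> P (xi ^+ a / xi ^+ b) ->
  exists2 m, (0 < m)%N & P (xi ^+ m).
Proof.
case=> _ _ PV _; case: ltngtP => // ab _ Pab.
- exists (b - a)%N; first by rewrite subn_gt0.
  by rewrite expfB // -invf_div; apply: PV.
- by exists (a - b)%N; rewrite ?subn_gt0 ?expfB.
Qed.

Section MannConsequences.
Variables (C : numFieldType) (H GA : C -> Prop).
Hypotheses (unitH : unit_subgroup H) (unitGA : unit_subgroup GA).
Hypothesis subH : forall x, H x -> GA x.
Hypothesis mann : forall R : seq (ratq * C),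
  (forall p, p \in R -> p.1.1 != 0 /\ GA p.2) ->
  \sum_(p <- R) ratq_val C p.1 * p.2 = 1 ->
  (forall m, size m = size R -> has id m ->
     \sum_(p <- mask m R) ratq_val C p.1 * p.2 != 0) ->
  forall p, p \in R -> H p.2.

Lemma mann_vanishing_sum_ratio (r0 : int) (y0 : C) (R : seq (int * C)) :
  r0 != 0 -> GA y0 -> (forall p, p \in R -> p.1 != 0 /\ GA p.2) ->
  r0%:~R * y0 + \sum_(p <- R) p.1%:~R * p.2 = 0 ->
  nonvanishing_subsums (fun p : int * C => p.1%:~R * p.2) R ->
  forall p, p \in R -> H (p.2 / y0).
Proof.
move=> r00 Gy0 GR Rsum Rnv p Rp.
case: unitGA => _ GM GV GN.
have [g [d [g0 Hg]]] := ratq_val_div_int C r00.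
have s0 : r0%:~R * y0 != 0 by rewrite mulf_neq0 ?intr_eq0 ?GN.
(* Dividing the relation by [- r0 y0] gives a nondegenerate solution of
   [sum_i q_i z_i = 1] with [q_i = - r_i / r0] and [z_i = y_i / y0]. *)
pose Rm s := [seq ((g q.1, d), q.2 / y0) | q <- s].
have sum_Rm s : \sum_(q <- Rm s) ratq_val C q.1 * q.2 =
    - (\sum_(q <- s) q.1%:~R * q.2) / (r0%:~R * y0).
  rewrite big_map -sumrN mulr_suml; apply: eq_bigr => q _ /=.
  by rewrite Hg; field; rewrite intr_eq0 r00 GN.
suff /(_ ((g p.1, d), p.2 / y0)) : forall q, q \in Rm R -> H q.2.
  by apply; exact: (map_f (fun q => ((g q.1, d), q.2 / y0))).
apply: mann.
- move=> q /mapP [q' /GR [q'0 Gq'] ->] /=; split; first exact: g0.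
  by apply: GM => //; apply: GV.
- rewrite sum_Rm -[RHS](divff s0); congr (_ / _).
  by apply/eqP; rewrite eq_sym -addr_eq0 Rsum.
- move=> m; rewrite size_map => Hsm Hid.
  by rewrite -map_mask sum_Rm mulf_neq0 ?invr_neq0 // oppr_eq0 Rnv.
Qed.

Lemma power_mem_of_root (xi : C) (p : seq (C * nat)) (n0 : nat) :
  GA xi -> (forall c, c \in p -> zfrac H c.1) ->
  \sum_(c <- p | c.2 == n0) c.1 != 0 -> \sum_(c <- p) c.1 * xi ^+ c.2 = 0 ->
  exists2 m, (0 < m)%N & H (xi ^+ m).
Proof.
move=> Gxi Hp pn0 proot.
have [_ GM GV GN] := unitGA; have [_ HM HV HN] := unitH.
have [D [D0 _ HD]] := zfrac_common_denominator unitH Hp.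
have [T [HT HTs]] := zspan_poly_expand xi HD.
pose f (t : (int * C) * nat) := t.1.1%:~R * (t.1.2 * xi ^+ t.2).
have T0 : \sum_(t <- T) f t = 0.
  have := HTs xpredT; rewrite /= => ->.
  by under eq_bigr do rewrite -mulrA; rewrite -mulr_sumr proot mulr0.
have TP : \sum_(t <- T | t.2 == n0) f t != 0.
  have := HTs (pred1 n0); rewrite /= => ->.
  rewrite (eq_bigr (fun c => D * xi ^+ n0 * c.1)) => [|c /eqP ->]; last by rewrite mulrAC.
  by rewrite -mulr_sumr !mulf_neq0 // expf_neq0 // GN.
have [t0 [R [Tt0 RT /eqP t0n0 hasR [R0 Rnv]]]] := vanishing_sum_split (f := f) T0 TP.
pose y (t : (int * C) * nat) : C := t.1.2 * xi ^+ t.2.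
have GT t : t \in T -> GA (y t).
  by move=> /HT [Ht _]; apply: GM; [apply: subH | apply: unit_subgroupX].
have ratio := mann_vanishing_sum_ratio (r0 := t0.1.1) (y0 := y t0)
  (R := [seq (t.1.1, y t) | t <- R]).
have /hasP [t1 Rt1 /eqP t1n0] := hasR.
apply: (exists_pos_power_mem (a := t1.2) (b := t0.2) unitH); first by rewrite t0n0; apply/eqP.
have [H0 _] := HT _ Tt0; have [H1 _] := HT _ (RT _ Rt1).
have -> : xi ^+ t1.2 / xi ^+ t0.2 = y t1 / y t0 * t0.1.2 / t1.1.2.
  by rewrite /y; field; rewrite (HN _ H1) (HN _ H0) expf_neq0 ?GN.
apply: (HM); last exact: HV.
apply: (HM) => //; apply: (ratio _ _ _ _ _ (t1.1.1, y t1)).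
- by have [] := HT _ Tt0.
- exact: GT.
- by move=> q /mapP [t /RT Tt ->]; split; [case: (HT _ Tt) | exact: GT].
- by rewrite big_map.
- by move=> m; rewrite size_map -map_mask big_map; exact: Rnv.
- exact: (map_f (fun t => (t.1.1, y t))).
Qed.

End MannConsequences.

Lemma big_key_uniq (V : zmodType) (I J : eqType) (k : I -> J) (F : I -> V)
    (s : seq I) (i0 : I) :
  uniq (map k s) -> i0 \in s -> \sum_(i <- s | k i == k i0) F i = F i0.
Proof.
elim: s => [|i s IH] //= /andP [ks us]; rewrite in_cons big_cons => /orP [/eqP ii0 | si0].
  subst i0; rewrite eqxx big1_seq ?addr0 // => j /andP [/eqP kj sj].
  by move: ks; rewrite -kj map_f.
have -> : (k i == k i0) = false by apply: contraNF ks => /eqP ->; exact: map_f.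
exact: IH.
Qed.

Section AlgebraicDependence.
Variable K : rcfType.

Lemma not_alg_dep_nil (k : K * K -> Prop) : ~ alg_dep k [::].
Proof.
move=> [p [up sp [c [pc c0]] psum]].
have nil_exp c' : c' \in p -> c'.2 = [::] by move=> /sp [_]; case: c'.2.
case: p up sp pc psum nil_exp => [|c1 [|c2 p]] //= up _ pc psum nil_exp.
  move: pc; rewrite inE => /eqP cc1; subst c1.
  move: psum; rewrite (nil_exp c (mem_head _ _)) /monom /= => /(congr1 (@complex_of K)).
  by rewrite complex_ofD complex_ofM addr0 mulr1 => /complex_of_inj.
by move: up; rewrite (nil_exp c1 (mem_head _ _)) (nil_exp c2) ?inE ?eqxx ?orbT.
Qed.

Lemma alg_dep_gen_field_mem (S : K * K -> Prop) x : S x -> alg_dep (gen_field S) [:: x].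
Proof.
move=> Sx; exists [:: (cone K, [:: 1%N]); (copp x, [:: 0%N])]; split => //.
- move=> c; rewrite !inE => /orP [] /eqP -> ; split => // P [[_ P1] _ PN _ _] PS //.
  exact/PN/PS.
- by exists (cone K, [:: 1%N]); rewrite mem_head; split => // -[] /eqP; rewrite oner_eq0.
apply: complex_of_inj; rewrite complex_of_foldr_cadd !big_map !big_cons big_nil /monom /=.
by rewrite !complex_ofM complex_ofN complex_of1 complex_of0; ring.
Qed.

Lemma alg_dep_of_free (k E F : K * K -> Prop) x :
  free_over k E F -> E x -> alg_dep F [:: x] -> alg_dep k [:: x].
Proof.
move=> free Ex Fx; apply: NNPP => kx.
have indep : set_alg_indep k (fun y => y = x).
  move=> [|y [|z xs]] uxs xsx; first exact: not_alg_dep_nil.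
    by rewrite (xsx y (mem_head _ _)).
  by move: uxs; rewrite /= (xsx y (mem_head _ _)) (xsx z) ?inE ?eqxx ?orbT.
by apply: (free _ _ indep [:: x]) => // [y -> | y] //; rewrite inE => /eqP.
Qed.

End AlgebraicDependence.

Section ModelGA.
Variable K : rcfType.
Local Notation C := (complex K).

Definition GA_complex (G : K * K -> Prop) (A : K -> Prop) (z : C) : Prop :=
  GAset G A (pair_of z).

Lemma ratq_K_complex (q : ratq) : ((ratq_K K q)%:C)%C = ratq_val C q.
Proof. by rewrite /ratq_K /ratq_val fmorph_div rmorph_int rmorph_nat. Qed.

Lemma unit_subgroup_GA (G : K * K -> Prop) (A : K -> Prop) :
  subgroupC (@on_circle K) G -> subgroupK (fun x : K => 0 < x) A ->
  unit_subgroup (GA_complex G A).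
Proof.
case=> Gc G1 GM GV [Ap A1 AM AV]; split.
- exists (cone K), 1; split => //; split => //; apply: complex_of_inj.
  by rewrite pair_ofK complex_ofM complex_of_cofK mulr1.
- move=> x y [g1 [a1 [Gg1 [Aa1 Ex]]]] [g2 [a2 [Gg2 [Aa2 Ey]]]].
  exists (cmul g1 g2), (a1 * a2); split; [exact: GM | split; first exact: AM].
  apply: complex_of_inj; rewrite pair_ofK -[x]pair_ofK -[y]pair_ofK Ex Ey.
  by rewrite !complex_ofM !complex_of_cofK rmorphM; ring.
- move=> x [g [a [Gg [Aa Ex]]]]; exists (cinv g), a^-1; split; first exact: GV.
  split; first exact: AV.
  apply: complex_of_inj; rewrite pair_ofK -[x]pair_ofK Ex.
  by rewrite !complex_ofM complex_ofV !complex_of_cofK fmorphV invfM.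
- move=> x [g [a [Gg [Aa Ex]]]]; rewrite -[x]pair_ofK Ex complex_ofM complex_of_cofK.
  have g0 := complex_of_circle_neq0 (Gc _ Gg).
  by rewrite mulf_neq0 // fmorph_eq0 gt_eqF ?Ap.
Qed.

Lemma zfrac_gen_field (G : K * K -> Prop) (A : K -> Prop) x :
  unit_subgroup (GA_complex G A) -> gen_field (GAset G A) x ->
  zfrac (GA_complex G A) (complex_of x).
Proof.
move=> unitGA /(_ (fun y => zfrac (GA_complex G A) (complex_of y))); apply.
  split.
  - rewrite complex_of0 complex_of1.
    by split; apply: (zfrac_zspan unitGA); [exact: zspan0 | exact: zspan1].
  - by move=> a b Ha Hb; rewrite complex_ofD; apply: (zfracD unitGA).
  - by move=> a Ha; rewrite complex_ofN; apply: zfracN.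
  - by move=> a b Ha Hb; rewrite complex_ofM; apply: (zfracM unitGA).
  - by move=> a Ha _; rewrite complex_ofV; apply: zfracV.
by move=> s Hs; apply/(zfrac_zspan unitGA)/zspan_mem; rewrite /GA_complex complex_ofK.
Qed.

Variables (G : K * K -> Prop) (A : K -> Prop) (G' : K * K -> Prop) (A' : K -> Prop).
Hypothesis subG : subgroupC (@on_circle K) G.
Hypothesis subA : subgroupK (fun x : K => 0 < x) A.
Hypothesis subG' : subgroupC G G'.
Hypothesis subA' : subgroupK A A'.
Hypothesis mann_sub : forall (a : seq ratq) (xs : seq (K * K)),
  (forall q, q \in a -> q.1 != 0) -> (forall x, x \in xs -> GAset G A x) ->
  nondeg_sol a xs -> forall x, x \in xs -> GAset G' A' x.

Lemma GA_complex_sub z : GA_complex G' A' z -> GA_complex G A z.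
Proof.
case: subG' subA' => sG' _ _ _ [sA' _ _ _] [g [a [Gg [Aa Ez]]]].
by exists g, a; split; [exact: sG' | split; [exact: sA' |]].
Qed.

Lemma unit_subgroup_GA' : unit_subgroup (GA_complex G' A').
Proof.
case: subG subA subG' subA' => Gc _ _ _ [Ap _ _ _] [sG' G'1 G'M G'V] [sA' A'1 A'M A'V].
apply: unit_subgroup_GA; first by split => // g /sG'; exact: Gc.
by split => // a /sA'; exact: Ap.
Qed.

Lemma mann_complex (R : seq (ratq * C)) :
  (forall p, p \in R -> p.1.1 != 0 /\ GA_complex G A p.2) ->
  \sum_(p <- R) ratq_val C p.1 * p.2 = 1 ->
  (forall m, size m = size R -> has id m ->
     \sum_(p <- mask m R) ratq_val C p.1 * p.2 != 0) ->
  forall p, p \in R -> GA_complex G' A' p.2.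
Proof.
move=> RGA Rsum Rnv p Rp.
pose xs := [seq pair_of q.2 | q <- R].
pose w s := [seq cmul (cofK (ratq_K K q.1)) (pair_of q.2) | q <- s].
have sum_w s : complex_of (foldr (@cadd K) (czero K) (w s)) =
    \sum_(q <- s) ratq_val C q.1 * q.2.
  rewrite complex_of_foldr_cadd big_map; apply: eq_bigr => q _.
  by rewrite complex_ofM complex_of_cofK ratq_K_complex pair_ofK.
apply: (mann_sub (a := map fst R) (xs := xs)); last exact: (map_f (fun q => pair_of q.2)).
- by move=> q /mapP [p' /RGA [] ? _ ->].
- by move=> x /mapP [p' /RGA [] _ ? ->].
rewrite /nondeg_sol /= zip_map -map_comp -/(w R); split; first by rewrite !size_map.
  by apply: complex_of_inj; rewrite sum_w Rsum.
move=> m; rewrite size_map -map_mask => Hsm Hid /(congr1 (@complex_of K)).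
by rewrite sum_w complex_of0; exact/eqP/Rnv.
Qed.

Lemma GA_power_of_alg_dep x : GAset G A x ->
  alg_dep (gen_field (GAset G' A')) [:: x] ->
  exists2 m, (0 < m)%N & GAset G' A' (cexp x m).
Proof.
move=> GAx [pp [upp spp [c [ppc c0]] ppsum]].
have one_exp c' : c' \in pp -> c'.2 = [:: head 0%N c'.2].
  by move=> /spp [_]; case: c'.2 => [|n []].
pose key (c' : (K * K) * seq nat) := head 0%N c'.2.
pose p := [seq (complex_of c'.1, key c') | c' <- pp].
have [m m0 GAm] : exists2 m, (0 < m)%N & GA_complex G' A' (complex_of x ^+ m).
  apply: (power_mem_of_root unit_subgroup_GA' (unit_subgroup_GA subG subA)
            GA_complex_sub mann_complex (p := p) (n0 := key c)).
  - by rewrite /GA_complex complex_ofK.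
  - move=> c' /mapP [c'' /spp [gc'' _] ->].
    exact: zfrac_gen_field unit_subgroup_GA' gc''.
  - have ukey : uniq (map key pp).
      rewrite -(map_inj_uniq (f := fun n : nat => [:: n])); last by move=> ? ? [].
      rewrite -map_comp (_ : map _ pp = map snd pp) //.
      by apply/eq_in_map => c' /one_exp ->.
    rewrite big_map (big_key_uniq (fun c' => complex_of c'.1) ukey) //.
    by apply/eqP; rewrite -complex_of0 => /complex_of_inj.
  - apply: etrans (congr1 (@complex_of K) ppsum).
    rewrite complex_of_foldr_cadd !big_map.
    apply: eq_big_seq => c' /one_exp ec'.
    by rewrite complex_ofM ec' /monom /= complex_ofM complex_ofX mulr1.
by exists m => //; move: GAm; rewrite /GA_complex -complex_ofX complex_ofK.
Qed.

Lemma GA_power_of_free (F : K * K -> Prop) x :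
  free_over (gen_field (GAset G' A')) F (gen_field (GAset G A)) ->
  GAset G A x -> F x -> exists2 m, (0 < m)%N & GAset G' A' (cexp x m).
Proof.
move=> free GAx Fx; apply: GA_power_of_alg_dep => //.
exact: (alg_dep_of_free free Fx (alg_dep_gen_field_mem GAx)).
Qed.

End ModelGA.

Section Descent.
Variables (K : rcfType) (K' : K -> Prop).
Variables (G G' : K * K -> Prop) (A A' : K -> Prop).
Hypothesis K'0 : K' 0.
Hypothesis subG : subgroupC (@on_circle K) G.
Hypothesis subA : subgroupK (fun x : K => 0 < x) A.
Hypothesis pureG' : pure_subgroupC G G'.
Hypothesis pureA' : pure_subgroupK A A'.
Hypothesis torsion_G' : forall u m, (0 < m)%N -> G u -> cexp u m = cone K -> G' u.
Hypothesis power_G'A' : forall x, GAset G A x -> Ci K' x ->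
  exists2 m, (0 < m)%N & GAset G' A' (cexp x m).

Lemma circle_cofK_sqr_norm g (a : K) : on_circle g ->
  (cmul g (cofK a)).1 ^+ 2 + (cmul g (cofK a)).2 ^+ 2 = a ^+ 2.
Proof. by rewrite /on_circle /= => g1; rewrite -[RHS]mul1r -g1; ring. Qed.

Lemma cmul_cofK1 (g : K * K) : cmul g (cofK 1) = g.
Proof. by apply: complex_of_inj; rewrite complex_ofM complex_of_cofK mulr1. Qed.

Lemma subgroupC_cexp (P Q : K * K -> Prop) g n : subgroupC P Q -> Q g -> Q (cexp g n).
Proof. by case=> _ Q1 QM _ Qg; elim: n => //= n; exact: QM. Qed.

Lemma cap_K'_sub_A' a : A a -> K' a -> A' a.
Proof.
move=> Aa K'a; case: subG subA pureA' => Gc _ _ _ [Ap _ _ _] [[sA' _ _ _] rootA'].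
have [[sG' _ _ _] _] := pureG'.
have GAa : GAset G A (cofK a).
  exists (cone K), a; split; first by case: subG.
  by split => //; apply: complex_of_inj; rewrite complex_ofM mul1r.
have [m m0 [g' [a' [G'g' [A'a' Eam]]]]] := power_G'A' GAa (conj K'a K'0).
have a0 := Ap _ Aa; have a'0 := Ap _ (sA' _ A'a').
have am_a' : a ^+ m = a'.
  have : cexp (cofK a) m = cofK (a ^+ m).
    by apply: complex_of_inj; rewrite complex_ofX !complex_of_cofK rmorphXn.
  move/(congr1 (fun y => y.1 ^+ 2 + y.2 ^+ 2)); rewrite Eam /= expr0n addr0.
  rewrite circle_cofK_sqr_norm; last exact/Gc/sG'.
  by move/eqP; rewrite eq_sym eqrXn2 ?exprn_ge0 ?ltW // => /eqP.
have [h [A'h hm]] := rootA' m a' m0 A'a' (ex_intro _ a (conj Aa am_a')).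
suff /eqP -> : a == h by [].
by rewrite -(eqrXn2 m0) ?hm ?am_a' //; apply: ltW; [exact: a0 | exact/Ap/sA'].
Qed.

Lemma cap_Ci_sub_G' g : G g -> Ci K' g -> G' g.
Proof.
move=> Gg K'g; case: subG subA pureG' => Gc _ GM GV [Ap A1 _ _] [[sG' _ G'M _] rootG'].
have [[sA' _ _ _] _] := pureA'.
have GAg : GAset G A g by exists g, 1; rewrite cmul_cofK1.
have [m m0 [g' [a' [G'g' [A'a' Egm]]]]] := power_G'A' GAg K'g.
have a'1 : a' = 1.
  have : on_circle (cexp g m) by apply: Gc; exact: subgroupC_cexp subG Gg.
  rewrite /on_circle Egm circle_cofK_sqr_norm; last exact/Gc/sG'.
  move=> /eqP; rewrite sqrf_eq1 => /orP [/eqP // | /eqP a'N].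
  by have := Ap _ (sA' _ A'a'); rewrite a'N ltr0N1.
have [h [G'h hm]] : exists h, G' h /\ cexp h m = cexp g m.
  apply: rootG' => //; last by exists g.
  by rewrite Egm a'1 cmul_cofK1.
have hc : complex_of h != 0 by apply/complex_of_circle_neq0/Gc/sG'.
pose u := cmul g (cinv h).
have G'u : G' u.
  apply: (torsion_G' m0); first by apply: GM => //; apply/GV/sG'.
  apply: complex_of_inj; rewrite complex_ofX complex_ofM complex_ofV complex_of1.
  by rewrite exprMn exprVn -!complex_ofX -hm divff // complex_ofX expf_neq0.
have -> : g = cmul u h.
  by apply: complex_of_inj; rewrite !complex_ofM complex_ofV mulfVK.
exact: G'M.
Qed.

End Descent.

Lemma is_lambda_unique (K : rcfType) (A : K -> Prop) (e k a b : K) :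
  subgroupK (fun x => 0 < x) A -> (forall c, A c -> 1 < c -> e <= c) ->
  is_lambda A e k a -> is_lambda A e k b -> a = b.
Proof.
case=> Ap _ AM AV e_min.
suff lt_lambda c d : is_lambda A e k c -> is_lambda A e k d -> ~ c < d.
  by move=> la lb; case: ltgtP (lt_lambda _ _ la lb) (lt_lambda _ _ lb la).
move=> [Ac /andP [ck kc]] [Ad /andP [dk kd]] cd.
have c0 := Ap _ Ac.
have : e <= d / c.
  by apply: e_min; [apply/AM/AV | rewrite ltr_pdivlMr // mul1r].
rewrite ler_pdivlMr // mulrC => ced.
by have := lt_le_trans kc (le_trans ced dk); rewrite ltxx.
Qed.

Lemma lambda_closed_iff (K : rcfType) (A A' K' : K -> Prop) (e : K) :
  subgroupK (fun x => 0 < x) A -> (forall c, A c -> 1 < c -> e <= c) ->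
  (forall k, 0 < k -> exists a, A a /\ a <= k < a * e) ->
  (forall a, (A a /\ K' a) <-> A' a) ->
  (forall k, K' k -> 0 < k -> exists a, A' a /\ a <= k < a * e) <->
  (forall k, K' k -> 0 < k -> forall a, is_lambda A e k a -> K' a).
Proof.
move=> subA e_min lam capA; split.
  move=> lamA' k K'k k0 a la; have [a' [/capA [Aa' K'a'] a'k]] := lamA' k K'k k0.
  by rewrite (is_lambda_unique subA e_min la (conj Aa' a'k)).
move=> lamK' k K'k k0; have [a [Aa ak]] := lam k k0.
by exists a; split => //; apply/capA; split => //; exact: lamK' (conj Aa ak).
Qed.

Lemma modelT_mann_G'A' (Gam : R * R -> Prop) (eps : R) (K : rcfType)
    (G : K * K -> Prop) (A : K -> Prop) (gp : R * R -> K * K) (dp : R -> K)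
    (G' : K * K -> Prop) (A' : K -> Prop) :
  modelT Gam eps G A gp dp ->
  (forall g, Gam g -> G' (gp g)) -> (forall d, Delta_eps eps d -> A' (dp d)) ->
  forall (a : seq ratq) (xs : seq (K * K)),
    (forall q, q \in a -> q.1 != 0) -> (forall x, x \in xs -> GAset G A x) ->
    nondeg_sol a xs -> forall x, x \in xs -> GAset G' A' x.
Proof.
move=> [_ _ _ [_ mann] _] GamG' DelA' a xs a0 GAxs sol.
have [gd [gdGD _ ->]] := mann a xs a0 GAxs sol.
elim: gd gdGD => // [[c d] gd IH] gdGD x; rewrite /= in_cons => /orP [/eqP -> | /IH].
  have [Gc Dd] := gdGD (c, d) (List.in_eq _ _).
  by exists (gp c), (dp d); split; [exact: GamG' | split; [exact: DelA' |]].
by apply => p gdp; apply/gdGD/List.in_cons.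
Qed.

Theorem mainTheorem12
  (Gam : R * R -> Prop) (eps : R) (Hpar : params_ok Gam eps)
  (K : rcfType) (G : K * K -> Prop) (A : K -> Prop)
  (gp : R * R -> K * K) (dp : R -> K)
  (HT : modelT Gam eps G A gp dp)
  (kappa : Type) (Hkinf : exists f : nat -> kappa, injective f)
  (Hkgt : card_lt {y : R * R | GamDelta Gam eps y} kappa)
  (K' : K -> Prop) (G' : K * K -> Prop) (A' : K -> Prop)
  (HK' : real_closed_subfield K')
  (HK'card : card_lt {x : K | K' x} kappa)
  (HG' : pure_subgroupC G G')
  (HGamG' : forall g, Gam g -> G' (gp g))
  (HG'K' : forall g, G' g -> Ci K' g)
  (HA' : pure_subgroupK A A')
  (HDelA' : forall d, Delta_eps eps d -> A' (dp d))
  (HA'K' : forall a, A' a -> K' a)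
  (Hfree : free_over (gen_field (GAset G' A')) (Ci K') (gen_field (GAset G A))) :
  (forall g, (G g /\ Ci K' g) <-> G' g) /\
  (forall a, (A a /\ K' a) <-> A' a) /\
  ((forall k, K' k -> 0 < k -> exists a, A' a /\ a <= k < a * dp eps) <->
   (forall k, K' k -> 0 < k -> forall a, is_lambda A (dp eps) k a -> K' a)).
Proof.
have [[subA [[_ _ eps_min] lam]] [subG _] _ _ torsion] := HT.
have [[[sG' G'1 G'M G'V] _] [[sA' A'1 A'M A'V] _]] := (HG', HA').
have [[K'0 _] _ _ _ _] := HK'.
have torsion_G' u m : (0 < m)%N -> G u -> cexp u m = cone K -> G' u.
  move=> m0 Gu um; have [c [Gamc _ ->]] := (torsion u).1 (conj Gu (ex_intro _ m (conj m0 um))).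
  exact: HGamG'.
have power_G'A' := GA_power_of_free subG subA (And4 sG' G'1 G'M G'V) (And4 sA' A'1 A'M A'V)
  (modelT_mann_G'A' HT HGamG' HDelA') Hfree.
have capA a : (A a /\ K' a) <-> A' a.
  split => [[Aa K'a] | A'a]; last by split; [exact: sA' | exact: HA'K'].
  exact: (cap_K'_sub_A' K'0 subG subA HG' HA' power_G'A').
split; last by split => //; exact: lambda_closed_iff subA eps_min lam capA.
move=> g; split => [[Gg K'g] | G'g]; last by split; [exact: sG' | exact: HG'K'].
exact: (cap_Ci_sub_G' subG subA HG' HA' torsion_G' power_G'A').
Qed.
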